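(* Let $n$ be a positive integer and let $\mathcal{P}$ be a nonzero linear partial difference operator with constant coefficients acting on functions $f:\mathbb{Z}^n\to\mathbb{C}$, i.e. $\mathcal{P} f(m_1,\dots,m_n)=\sum_{\alpha\in A} c_\alpha f(m_1+\alpha_1,\dots,m_n+\alpha_n)$ for a finite set $A\subset\mathbb{Z}^n$ and complex constants $c_\alpha$. Then there exists a function $f:\mathbb{Z}^n\to\mathbb{C}$ such that $\mathcal{P} f(m_1,\dots,m_n)=\delta(m_1,\dots,m_n)$ for all $(m_1,\dots,m_n)\in\mathbb{Z}^n$, where $\delta(m_1,\dots,m_n)=1$ if $(m_1,\dots,m_n)=(0,\dots,0)$ and $\delta(m_1,\dots,m_n)=0$ otherwise.
   Context: The operator $\mathcal{P}$ is called nonzero if it is not the zero operator, equivalently if its symbol, the Laurent polynomial $P(z_1,\dots,z_n)=\sum_{\alpha\in A}c_\alpha z_1^{\alpha_1}\cdots z_n^{\alpha_n}$, is not the zero Laurent polynomial. The paper remarks that the complex numbers may be replaced by any field. *)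

From mathcomp Require Import all_boot all_order all_algebra.
From mathcomp Require Import complex.
From mathcomp Require Import Rstruct.
Set Implicit Arguments. Unset Strict Implicit. Unset Printing Implicit Defensive.
Import GRing.Theory Num.Theory.
Local Open Scope ring_scope.

Notation CC := (complex Rdefinitions.R).

Definition diff_op (n : nat) (A : seq 'rV[int]_n) (c : 'rV[int]_n -> CC)
  (f : 'rV[int]_n -> CC) (m : 'rV[int]_n) : CC :=
  \sum_(a <- A) c a * f (m + a).

Definition delta (n : nat) (m : 'rV[int]_n) : CC := if m == 0 then 1 else 0.

From mathcomp Require Import all_boot all_order all_algebra.
From mathcomp Require Import complex Rstruct zify.
Import Order.TTheory GRing.Theory Num.Theory.
Set Implicit Arguments. Unset Strict Implicit. Unset Printing Implicit Defensive.
Local Open Scope ring_scope.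

(* Choose an additive weight w : Z^n -> Z that separates the shifts of P, and
   let a0 be the shift of least weight with c a0 <> 0.  Then the equation
   P f = r can be solved for f(p + a0) in terms of the values f(p + a), which
   all have larger weight.  So if r vanishes where w > 0 (as delta does), one
   may put f = 0 where w(x - a0) > 0 and define f elsewhere by recursion on
   the distance -w(x - a0) to that half-space. *)

Section HalfSpaceSolution.
Variables (K : fieldType) (V : zmodType) (A : seq V) (c : V -> K).
Variables (w : {additive V -> int}) (a0 : V).
Hypotheses (uniqA : uniq A) (a0A : a0 \in A) (c_a0 : c a0 != 0).
Hypothesis a0_min : forall a, a \in A -> a != a0 -> c a != 0 -> w a0 < w a.
Variable r : V -> K.
Hypothesis r_half : forall p, 0 < w p -> r p = 0.

Lemma weight_shift p a : w (p + a - a0) = w p + w a - w a0.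
Proof. by rewrite raddfB raddfD. Qed.

Lemma eq_sum_support (F G : V -> K) :
    (forall a, a \in A -> a != a0 -> c a != 0 -> F a = G a) ->
  \sum_(a <- A | a != a0) c a * F a = \sum_(a <- A | a != a0) c a * G a.
Proof.
move=> FG; rewrite big_seq_cond [RHS]big_seq_cond; apply: eq_bigr => a /andP[aA a_a0].
by have [->|ca] := eqVneq (c a) 0; rewrite ?mul0r // FG.
Qed.

Fixpoint halfspace_approx (k : nat) (p : V) : K :=
  if k is k'.+1 then
    if 0 < w p then 0
    else (r p - \sum_(a <- A | a != a0) c a * halfspace_approx k' (p + a - a0)) / c a0
  else 0.

Lemma halfspace_approx_pos k p : 0 < w p -> halfspace_approx k p = 0.
Proof. by case: k => //= k ->. Qed.

Lemma halfspace_approx_stable k k' p :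
  - w p < k%:Z -> - w p < k'%:Z -> halfspace_approx k p = halfspace_approx k' p.
Proof.
have [wp_pos|wp_npos] := ltP 0 (w p); first by rewrite !halfspace_approx_pos.
elim: k k' p wp_npos => [|k IH] [|k'] p wp_npos /= hk hk'; try lia.
rewrite ltNge wp_npos /=; congr ((_ - _) / _); apply: eq_sum_support.
move=> a aA a_a0 ca; have := a0_min aA a_a0 ca.
have [wq_pos|wq_npos] := ltP 0 (w (p + a - a0)); first by rewrite !halfspace_approx_pos.
by move=> lt_a; apply: IH => //; rewrite weight_shift; lia.
Qed.

Definition halfspace_sol (p : V) : K := halfspace_approx (absz (w p)).+1 p.

Lemma halfspace_approx_sol k p : - w p < k%:Z -> halfspace_approx k p = halfspace_sol p.
Proof. by move=> hk; apply: halfspace_approx_stable => //; lia. Qed.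

Lemma halfspace_solE p : halfspace_sol p = if 0 < w p then 0
  else (r p - \sum_(a <- A | a != a0) c a * halfspace_sol (p + a - a0)) / c a0.
Proof.
rewrite /halfspace_sol /=; case: ifP => // /negbT; rewrite -leNgt => wp_npos.
congr ((_ - _) / _); apply: eq_sum_support => a aA a_a0 ca.
by apply: halfspace_approx_sol; have := a0_min aA a_a0 ca; rewrite weight_shift; lia.
Qed.

Lemma halfspace_sol_pos p : 0 < w p -> halfspace_sol p = 0.
Proof. by rewrite halfspace_solE => ->. Qed.

Lemma halfspace_sol_solves m : \sum_(a <- A) c a * halfspace_sol (m + a - a0) = r m.
Proof.
rewrite (bigD1_seq a0) //= addrK.
have [wm_pos|wm_npos] := ltP 0 (w m).
  rewrite r_half // halfspace_sol_pos // mulr0 add0r.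
  rewrite (@eq_sum_support _ (fun=> 0)) => [|a aA a_a0 ca].
    by rewrite big1 // => a _; rewrite mulr0.
  by apply: halfspace_sol_pos; have := a0_min aA a_a0 ca; rewrite weight_shift; lia.
by rewrite halfspace_solE ltNge wm_npos /= mulrC divfK // subrK.
Qed.

End HalfSpaceSolution.

Lemma exists_nat_nonroot (R : numDomainType) (p : {poly R}) :
  p != 0 -> exists k : nat, ~~ root p k%:R.
Proof.
move=> p_neq0; pose rs := [seq k%:R | k <- iota 0 (size p)] : seq R.
have uniq_rs : uniq rs.
  by rewrite map_inj_uniq ?iota_uniq // => i j /eqP; rewrite eqr_nat => /eqP.
have : ~~ all (root p) rs.
  by apply/negP => /(max_poly_roots p_neq0)/(_ uniq_rs); rewrite size_map size_iota ltnn.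
by case/allPn => _ /mapP[k _ ->]; exists k.
Qed.

Definition rVweight {R : comNzRingType} {n : nat} (N : R) : {additive 'rV[R]_n -> R} :=
  horner_eval N \o rVpoly.

Lemma exists_rVweight_injective (R : numDomainType) (n : nat) (A : seq 'rV[R]_n) :
  exists N : R, {in A &, injective (rVweight N)}.
Proof.
(* rVweight N (b - a) is the value at N of the polynomial with coefficients
   b - a, so it suffices that N avoids the roots of Q. *)
pose Q := \prod_(a <- A) \prod_(b <- A | b != a) rVpoly (b - a).
have Q_neq0 : Q != 0.
  rewrite prodf_seq_neq0; apply/allP => a _ /=.
  rewrite prodf_seq_neq0; apply/allP => b _ /=; apply/implyP => b_a.
  by rewrite raddf_eq0 ?subr_eq0 //; apply: can_inj (@rVpolyK _ _).
have [k Q_k] := exists_nat_nonroot Q_neq0; exists k%:R => a b aA bA w_ab.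
apply/eqP; apply: contraNT Q_k => a_b; rewrite rootE horner_prod prodf_seq_eq0.
apply/hasP; exists b => //=; rewrite horner_prod prodf_seq_eq0; apply/hasP.
by exists a => //=; rewrite a_b; apply/eqP; have := raddfB (rVweight k%:R) a b; rewrite w_ab subrr.
Qed.

Lemma exists_argmin_seq (T : eqType) (d : Order.disp_t) (U : orderType d)
    (h : T -> U) (x : T) (s : seq T) :
  exists2 a, a \in x :: s & forall b, b \in x :: s -> (h a <= h b)%O.
Proof.
elim: s x => [|y s IH] x.
  by exists x => [|b]; rewrite ?mem_head // mem_seq1 => /eqP ->.
have [a a_ys min_a] := IH y; have [le_xa|lt_ax] := leP (h x) (h a).
  exists x => [|b]; first exact: mem_head.
  by rewrite in_cons => /predU1P[-> //|/min_a]; apply: le_trans.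
exists a => [|b]; first by rewrite in_cons a_ys orbT.
by rewrite in_cons => /predU1P[->|/min_a //]; apply: ltW.
Qed.

Theorem mainTheorem1 (n : nat) (hn : (0 < n)%N)
  (A : seq 'rV[int]_n) (c : 'rV[int]_n -> CC) :
  uniq A -> (exists2 a, a \in A & c a != 0) ->
  exists f : 'rV[int]_n -> CC, forall m : 'rV[int]_n, diff_op A c f m = delta m.
Proof.
move=> uniqA [a1 a1A c_a1].
have [N w_inj] := exists_rVweight_injective A.
pose w : {additive 'rV[int]_n -> int} := rVweight N.
have [a0 a0S a0_le] : exists2 a0, a0 \in [seq a <- A | c a != 0] &
    forall b, b \in [seq a <- A | c a != 0] -> w a0 <= w b.
  have : a1 \in [seq a <- A | c a != 0] by rewrite mem_filter c_a1.
  by case: [seq a <- A | c a != 0] => // x s _; apply: exists_argmin_seq.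
move: a0S; rewrite mem_filter => /andP[c_a0 a0A].
have a0_min a : a \in A -> a != a0 -> c a != 0 -> w a0 < w a.
  move=> aA a_a0 ca; rewrite lt_neqAle a0_le ?mem_filter ?ca // andbT.
  by apply: contra a_a0 => /eqP w_eq; rewrite (w_inj _ _ a0A aA w_eq).
have delta_half p : 0 < w p -> delta p = 0.
  by rewrite /delta; case: eqP => // ->; rewrite raddf0 ltxx.
exists (fun x => halfspace_sol A c w a0 (@delta n) (x - a0)) => m.
exact: halfspace_sol_solves.
Qed.
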